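(* Let $f\in\mathcal O_{\mathbb C^3,0}$, let $F_n$ be a compact two-dimensional face of $\Gamma_+(f)$ and $F_{n'}$ another two-dimensional face (compact or not) with $F_n\cap F_{n'}=[p_1,p_2]$ an edge of $F_n$. Let $q_1,q_2$ be the integral points of $\partial F_n$ such that $[p_1,q_1]$ and $[p_2,q_2]$ are the primitive segments of $\partial F_n$ adjacent to $[p_1,p_2]$ (i.e. lying on the other edges of $F_n$ through $p_1$, resp. $p_2$), and set $\alpha_1=\ell_{n'}(q_1-p_1)$, $\alpha_2=\ell_{n'}(q_2-p_2)$. If $p_1$ is a regular vertex of $F_n$, then $\alpha_{n,n'}=\alpha_1$ and $\alpha_1\mid\alpha_2$.
   Context: $\Gamma_+(f)=\operatorname{conv}\bigcup_{p\in\operatorname{supp}f}(p+\mathbb R^3_{\ge0})$. For a two-dimensional face $F_m$ of $\Gamma_+(f)$, $\ell_m$ is the primitive integral linear function on $\mathbb R^3$ whose minimal set on $\Gamma_+(f)$ is $F_m$. $\alpha_{n,n'}$ is the content (gcd of coordinates) of the cross product $\ell_n\times\ell_{n'}$ of the coefficient vectors. The face $F_n$ is regarded as an integral polygon in the affine plane $H$ containing it with lattice $H\cap\mathbb Z^3$; a vertex is regular if the primitive lattice vectors along its two edges form a basis of that lattice; a segment is primitive if its endpoints are lattice points and it contains no other lattice point. *)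

From HB Require Import structures.
From mathcomp Require Import all_boot all_order all_algebra.
Set Implicit Arguments. Unset Strict Implicit. Unset Printing Implicit Defensive.
Import Order.TTheory GRing.Theory Num.Theory.
Local Open Scope ring_scope.

Definition intv (R : realFieldType) (p : 'rV[int]_3) : 'rV[R]_3 :=
  map_mx (fun z : int => z%:~R) p.

(* evaluation of a linear function with coefficient vector u at v *)
Definition dot (T : comNzRingType) (u v : 'rV[T]_3) : T :=
  \sum_(i < 3) u 0 i * v 0 i.

Definition cross (T : comNzRingType) (u v : 'rV[T]_3) : 'rV[T]_3 :=
  \row_(i < 3)
    (let c (j : nat) := u ord0 (inord j) in let d (j : nat) := v ord0 (inord j) in
     if val i == 0%N then c 1%N * d 2%N - c 2%N * d 1%N
     else if val i == 1%N then c 2%N * d 0%N - c 0%N * d 2%N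
     else c 0%N * d 1%N - c 1%N * d 0%N).

Definition content (u : 'rV[int]_3) : nat :=
  let c (j : nat) := absz (u ord0 (inord j)) in gcdn (gcdn (c 0%N) (c 1%N)) (c 2%N).

Definition primitive_vec (u : 'rV[int]_3) : Prop := content u = 1%N.

(* Gamma_+(f) = conv ( U_{p in supp f} (p + R^3_{>=0}) ),
   membership: x is a finite convex combination of points p_i + v_i
   with p_i in the support and v_i in R^3_{>=0}. *)
Definition newton (R : realFieldType) (S : 'rV[int]_3 -> Prop) (x : 'rV[R]_3) : Prop :=
  exists (n : nat) (p : 'I_n -> 'rV[int]_3) (v : 'I_n -> 'rV[R]_3) (lam : 'I_n -> R),
    [/\ forall k, S (p k),
        forall k j, 0 <= v k 0 j,
        forall k, 0 <= lam k,
        \sum_k lam k = 1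
      & x = \sum_k lam k *: (intv R (p k) + v k)].

Definition face (R : realFieldType) (S : 'rV[int]_3 -> Prop) (l : 'rV[int]_3)
  (x : 'rV[R]_3) : Prop :=
  newton S x /\ forall y, newton S y -> dot (intv R l) x <= dot (intv R l) y.

(* l is the primitive integral linear function of a two-dimensional face *)
Definition two_dim_face (R : realFieldType) (S : 'rV[int]_3 -> Prop) (l : 'rV[int]_3) : Prop :=
  primitive_vec l /\
  exists a b c : 'rV[R]_3,
    [/\ face S l a, face S l b, face S l c & cross (b - a) (c - a) != 0].

Definition compact_face (R : realFieldType) (S : 'rV[int]_3 -> Prop) (l : 'rV[int]_3) : Prop :=
  exists M : R, forall x : 'rV[R]_3, face S l x -> forall i, `|x 0 i| <= M.

Definition seg (R : realFieldType) (a b x : 'rV[R]_3) : Prop :=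
  exists t : R, [/\ 0 <= t, t <= 1 & x = (1 - t) *: a + t *: b].

Definition is_edge (R : realFieldType) (F : 'rV[R]_3 -> Prop) (a b : 'rV[R]_3) : Prop :=
  a != b /\ exists m : 'rV[R]_3,
    forall x, (F x /\ forall y, F y -> dot m x <= dot m y) <-> seg a b x.

Definition primitive_seg (R : realFieldType) (p q : 'rV[int]_3) : Prop :=
  p != q /\ forall z : 'rV[int]_3,
    seg (intv R p) (intv R q) (intv R z) -> z = p \/ z = q.

Definition adjacent_prim (R : realFieldType) (S : 'rV[int]_3 -> Prop) (l : 'rV[int]_3)
  (p p' q : 'rV[int]_3) : Prop :=
  primitive_seg R p q /\
  exists a b : 'rV[R]_3,
    [/\ is_edge (face S l) a b, seg a b (intv R p), seg a b (intv R q)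
      & ~ (forall x, seg a b x <-> seg (intv R p) (intv R p') x)].

Definition regular_vertex (R : realFieldType) (S : 'rV[int]_3 -> Prop) (l : 'rV[int]_3)
  (p : 'rV[int]_3) : Prop :=
  forall (a b a' b' : 'rV[R]_3) (u u' : 'rV[int]_3),
    is_edge (face S l) a b -> is_edge (face S l) a' b' ->
    seg a b (intv R p) -> seg a' b' (intv R p) ->
    ~ (forall x, seg a b x <-> seg a' b' x) ->
    seg a b (intv R u) -> seg a' b' (intv R u') ->
    primitive_seg R p u -> primitive_seg R p u' ->
    (forall m k : int, m *: (u - p) + k *: (u' - p) = 0 -> m = 0 /\ k = 0) /\
    (forall v : 'rV[int]_3, dot l v = 0 ->
       exists m k : int, v = m *: (u - p) + k *: (u' - p)).

(* Put a := l_n (primitive) and b := l_n'.  Let u be the first lattice point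
   after p1 on the common edge [p1, p2], so b(u - p1) = 0.  By regularity of p1,
   e1 := u - p1 and e2 := q1 - p1 form a basis of the lattice a^perp in Z^3,
   hence b(a^perp) = b(e2) Z, and alpha_1 | alpha_2 because q2 - p2 lies in
   a^perp.  The coordinates of a x b are the values b(e_i x a) with e_i x a in
   a^perp, so alpha_1 divides the content of a x b; conversely
   (a x b) x e2 = - b(e2) a with a primitive, so that content divides
   alpha_1 = b(e2), which is nonnegative since F_n' minimizes b. *)

From HB Require Import structures.
From mathcomp Require Import all_boot all_order all_algebra ring zify.
Set Implicit Arguments. Unset Strict Implicit. Unset Printing Implicit Defensive.
Import Order.TTheory GRing.Theory Num.Theory.
Local Open Scope ring_scope.

Section Row3.
Variable T : Type.

Lemma row3P (u v : 'rV[T]_3) :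
  u 0 (inord 0) = v 0 (inord 0) -> u 0 (inord 1) = v 0 (inord 1) ->
  u 0 (inord 2) = v 0 (inord 2) -> u = v.
Proof.
move=> h0 h1 h2; apply/matrixP => i j; rewrite [i]ord1 -[j]inord_val.
by case: j => [[|[|[|k]]]].
Qed.

Lemma ord3P (P : 'I_3 -> Prop) :
  P (inord 0) -> P (inord 1) -> P (inord 2) -> forall i, P i.
Proof. by move=> h0 h1 h2 i; rewrite -[i]inord_val; case: i => [[|[|[|k]]]]. Qed.

End Row3.

Section DotCross.
Variable T : comNzRingType.
Implicit Types a b c u v w : 'rV[T]_3.

Lemma dotE u v :
  dot u v = u 0 (inord 0) * v 0 (inord 0) + u 0 (inord 1) * v 0 (inord 1)
          + u 0 (inord 2) * v 0 (inord 2).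
Proof.
rewrite /dot !big_ord_recr big_ord0 /= add0r.
by congr (_ + _ + _); congr (u 0 _ * v 0 _); apply: val_inj; rewrite /= inordK.
Qed.

Lemma crossE u v :
  [/\ cross u v 0 (inord 0) = u 0 (inord 1) * v 0 (inord 2) - u 0 (inord 2) * v 0 (inord 1),
      cross u v 0 (inord 1) = u 0 (inord 2) * v 0 (inord 0) - u 0 (inord 0) * v 0 (inord 2)
    & cross u v 0 (inord 2) = u 0 (inord 0) * v 0 (inord 1) - u 0 (inord 1) * v 0 (inord 0)].
Proof. by rewrite !mxE /= !inordK. Qed.

Lemma dotD u v w : dot u (v + w) = dot u v + dot u w.
Proof. rewrite !dotE !mxE; ring. Qed.

Lemma dotB u v w : dot u (v - w) = dot u v - dot u w.
Proof. rewrite !dotE !mxE; ring. Qed.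

Lemma dotZ u v k : dot u (k *: v) = k * dot u v.
Proof. rewrite !dotE !mxE; ring. Qed.

Lemma dot_delta u i : dot u (delta_mx 0 i) = u 0 i.
Proof.
by rewrite /dot (bigD1 i) //= big1 => [|j /negbTE nji]; rewrite !mxE ?eqxx ?nji ?mulr1 ?mulr0 ?addr0.
Qed.

Lemma dot_crossA a b c : dot (cross a b) c = dot b (cross c a).
Proof. by case: (crossE a b) (crossE c a) => a0 a1 a2 [c0 c1 c2]; rewrite !dotE a0 a1 a2 c0 c1 c2; ring. Qed.

Lemma dot_cross_r a c : dot a (cross c a) = 0.
Proof. by case: (crossE c a) => c0 c1 c2; rewrite dotE c0 c1 c2; ring. Qed.

Lemma cross_crossl a b c : cross (cross a b) c = dot a c *: b - dot b c *: a.
Proof.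
case: (crossE a b) => ab0 ab1 ab2; case: (crossE (cross a b) c) => e0 e1 e2.
by apply: row3P; rewrite ?e0 ?e1 ?e2 ?ab0 ?ab1 ?ab2 !mxE !dotE; ring.
Qed.

End DotCross.

Section Content.
Implicit Types (u v : 'rV[int]_3) (d k : int).

Lemma dvdz_content u (i : 'I_3) : ((content u)%:Z %| u ord0 i)%Z.
Proof.
move: i; apply: ord3P; rewrite /content /dvdz /=.
- exact: dvdn_trans (dvdn_gcdl _ _) (dvdn_gcdl _ _).
- exact: dvdn_trans (dvdn_gcdl _ _) (dvdn_gcdr _ _).
- exact: dvdn_gcdr.
Qed.

Lemma dvdz_contentP d u :
  (forall i : 'I_3, (d %| u ord0 i)%Z) -> (d %| (content u)%:Z)%Z.
Proof.
move=> du; rewrite /content unfold_in /= !dvdn_gcd.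
by do 2?[apply/andP; split]; apply: du.
Qed.

Lemma content_scale k u : content (k *: u) = (`|k| * content u)%N.
Proof. by rewrite /content !mxE !abszM !muln_gcdr. Qed.

Lemma content_eq0 u : (content u == 0%N) = (u == 0).
Proof.
apply/idP/eqP => [c0|->]; last by rewrite /content !mxE.
apply/matrixP => i j; rewrite [i]ord1 mxE; apply/eqP; rewrite -dvd0z.
by have := @dvdz_content u j; rewrite (eqP c0).
Qed.

Lemma content_bezout u : exists c, dot c u = (content u)%:Z.
Proof.
have [x0 [x1 e01]] := Bezoutz (u 0 (inord 0)) (u 0 (inord 1)).
have [y [x2 e]] := Bezoutz (gcdz (u 0 (inord 0)) (u 0 (inord 1))) (u 0 (inord 2)).
exists (\row_(i < 3) [:: y * x0; y * x1; x2]`_i).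
rewrite dotE !mxE !inordK //=; apply: etrans e; rewrite -e01; ring.
Qed.

Lemma content_primitive_part u : u != 0 ->
  exists w, content w = 1%N /\ u = (content u)%:Z *: w.
Proof.
rewrite -content_eq0 => u0.
pose w := map_mx (fun x => (x %/ (content u)%:Z)%Z) u.
have uw : u = (content u)%:Z *: w.
  by apply/matrixP => i j; rewrite [i]ord1 !mxE mulrC divzK ?dvdz_content.
have cu_gt0 : (0 < content u)%N by rewrite lt0n.
exists w; split=> //; apply/eqP; rewrite -(eqn_pmul2l cu_gt0) muln1.
by apply/eqP; rewrite [in RHS]uw content_scale.
Qed.

Lemma dvdz_content_cross u v (i : 'I_3) : ((content u)%:Z %| cross u v ord0 i)%Z.
Proof.
case: (crossE u v) => c0 c1 c2; move: i; apply: ord3P;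
  by rewrite ?c0 ?c1 ?c2 rpredB // dvdz_mulr // dvdz_content.
Qed.

Section OrthogonalLattice.
Variables a b e1 e2 : 'rV[int]_3.
Hypothesis b_e1 : dot b e1 = 0.
Hypothesis orth_basis :
  forall v, dot a v = 0 -> exists m k : int, v = m *: e1 + k *: e2.

Lemma dvdz_dot_orth v : dot a v = 0 -> (dot b e2 %| dot b v)%Z.
Proof.
by move=> /orth_basis [m [k ->]]; rewrite dotD !dotZ b_e1 mulr0 add0r dvdz_mull.
Qed.

Hypotheses (a_prim : content a = 1%N) (a_e2 : dot a e2 = 0).

Lemma content_cross_orth : (content (cross a b))%:Z = `|dot b e2|.
Proof.
have dot_dvd_content : (dot b e2 %| (content (cross a b))%:Z)%Z.
  apply: dvdz_contentP => i.
  by rewrite -dot_delta dot_crossA dvdz_dot_orth ?dot_cross_r.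
have content_dvd_dot : (content (cross a b) %| `|dot b e2|)%N.
  have <- : content (cross (cross a b) e2) = `|dot b e2|%N.
    rewrite cross_crossl a_e2 scale0r add0r -scaleNr content_scale.
    by rewrite a_prim abszN muln1.
  exact: (dvdz_contentP (dvdz_content_cross _ _)).
rewrite -abszE; congr Posz; apply/eqP.
by rewrite eqn_dvd content_dvd_dot; apply: dot_dvd_content.
Qed.

End OrthogonalLattice.
End Content.

Section LatticePoints.
Variable R : realFieldType.
Implicit Types (p q u w x y z l : 'rV[int]_3) (k : int).

Lemma intvD u w : intv R (u + w) = intv R u + intv R w.
Proof. by apply/matrixP => i j; rewrite !mxE rmorphD. Qed.

Lemma intvB u w : intv R (u - w) = intv R u - intv R w.
Proof. by apply/matrixP => i j; rewrite !mxE rmorphB. Qed.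

Lemma intvZ k u : intv R (k *: u) = k%:~R *: intv R u.
Proof. by apply/matrixP => i j; rewrite !mxE rmorphM. Qed.

Lemma intv_inj : injective (intv R).
Proof.
move=> u w e; apply/matrixP => i j; apply: (@intr_inj R).
by have := congr1 (fun M : 'rV[R]_3 => M i j) e; rewrite !mxE.
Qed.

Lemma dot_intv l x : dot (intv R l) (intv R x) = (dot l x)%:~R.
Proof. by rewrite /dot rmorph_sum; apply: eq_bigr => i _; rewrite !mxE rmorphM. Qed.

Lemma seg_first (a b : 'rV[R]_3) : seg a b a.
Proof. by exists 0; rewrite ?lexx ?ler01 // subr0 scale1r scale0r addr0. Qed.

Lemma seg_last (a b : 'rV[R]_3) : seg a b b.
Proof. by exists 1; rewrite ?lexx ?ler01 // subrr scale0r scale1r add0r. Qed.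

(* A Bezout vector c with dot c w = 1 shows that the parameter of a lattice
   point on [p, p + w] is an integer. *)
Lemma primitive_seg_add p w : content w = 1%N -> primitive_seg R p (p + w).
Proof.
move=> w_prim; split.
  by rewrite -[X in X != _]addr0 (inj_eq (addrI p)) eq_sym -content_eq0 w_prim.
move=> z [t [t0 t1 ez]].
have ez' : intv R z = intv R p + t *: intv R w.
  by rewrite ez intvD scalerDr addrA -scalerDl subrK scale1r.
have [c cw] := content_bezout w.
pose n := dot c (z - p).
have nt : n%:~R = t.
  by rewrite -dot_intv intvB ez' addrAC subrr add0r dotZ dot_intv cw w_prim mulr1.
have [n0 n1] : 0 <= n /\ n <= 1 by rewrite -(ler_int R) -[n <= 1](ler_int R) nt.
have -> : z = p + n *: w by apply: intv_inj; rewrite intvD intvZ nt.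
have [->|->] : n = 0 \/ n = 1 by lia.
- by left; rewrite scale0r addr0.
- by right; rewrite scale1r.
Qed.

Lemma seg_primitive_step p1 p2 : p1 != p2 ->
  exists u (g : int), [/\ seg (intv R p1) (intv R p2) (intv R u),
    primitive_seg R p1 u, g != 0 & p2 - p1 = g *: (u - p1)].
Proof.
move=> p12; have [|w [w_prim wE]] := @content_primitive_part (p2 - p1).
  by rewrite subr_eq0 eq_sym.
set g := (content _)%:Z in wE.
have g_gt0 : 0 < g.
  rewrite lt0r le0z_nat andbT; apply: contra p12 => /eqP g0.
  by rewrite eq_sym -subr_eq0 wE g0 scale0r.
exists (p1 + w), g; split.
- have p2E : intv R p2 = intv R p1 + g%:~R *: intv R w.
    by rewrite -intvZ -intvD -wE addrC subrK.
  exists (g%:~R)^-1; split.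
  + by rewrite invr_ge0 ler0z ltW.
  + by rewrite invf_le1 ?ltr0z // ler1z.
  + rewrite p2E intvD scalerDr scalerA mulVf ?intr_eq0 ?gt_eqF // scale1r.
    by rewrite addrA -scalerDl subrK scale1r.
- exact: primitive_seg_add.
- by rewrite gt_eqF.
- by rewrite addrAC subrr add0r.
Qed.

Lemma edge_seg_sub (F : 'rV[R]_3 -> Prop) (a b x : 'rV[R]_3) :
  is_edge F a b -> seg a b x -> F x.
Proof. by move=> [_ [m hm]] /hm []. Qed.

Variable S : 'rV[int]_3 -> Prop.

Lemma face_dot_sub_eq0 l x y :
  face S l (intv R x) -> face S l (intv R y) -> dot l (x - y) = 0.
Proof.
move=> [nx hx] [ny hy]; apply/eqP; rewrite dotB subr_eq0; apply/eqP/(@intr_inj R).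
by rewrite -!dot_intv; apply/le_anti; rewrite hx ?hy.
Qed.

Lemma face_dot_ge0 l p q :
  face S l (intv R p) -> newton S (intv R q) -> 0 <= dot l (q - p).
Proof. by move=> [_ hp] nq; rewrite dotB subr_ge0 -(ler_int R) -!dot_intv hp. Qed.

End LatticePoints.

Theorem mainTheorem13 (R : realFieldType) (S : 'rV[int]_3 -> Prop)
  (hS : forall p, S p -> forall i, 0 <= p 0 i)
  (ln ln' p1 p2 q1 q2 : 'rV[int]_3) :
  two_dim_face R S ln -> compact_face R S ln ->
  two_dim_face R S ln' ->
  p1 != p2 ->
  (forall x : 'rV[R]_3,
     (face S ln x /\ face S ln' x) <-> seg (intv R p1) (intv R p2) x) ->
  is_edge (face S ln) (intv R p1) (intv R p2) ->
  adjacent_prim R S ln p1 p2 q1 ->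
  adjacent_prim R S ln p2 p1 q2 ->
  regular_vertex R S ln p1 ->
  ((content (cross ln ln'))%:Z = dot ln' (q1 - p1) /\
   (dot ln' (q1 - p1) %| dot ln' (q2 - p2))%Z).
Proof.
move=> [ln_prim _] _ _ p12 common_edge edge12
  [q1_prim [a [b [edge_ab p1_ab q1_ab ab_ne]]]] [_ [a2 [b2 [edge2 _ q2_ab2 _]]]] reg.
have [p1_n p1_n'] := (common_edge (intv R p1)).2 (seg_first _ _).
have [p2_n p2_n'] := (common_edge (intv R p2)).2 (seg_last _ _).
have q1_n := edge_seg_sub edge_ab q1_ab.
have q2_n := edge_seg_sub edge2 q2_ab2.
have [u [g [u_seg u_prim g0 p21]]] := seg_primitive_step R p12.
have ln'_u : dot ln' (u - p1) = 0.
  have /eqP := face_dot_sub_eq0 p2_n' p1_n'.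
  by rewrite p21 dotZ mulf_eq0 (negbTE g0) => /eqP.
have ab_ne' : ~ (forall x, seg (intv R p1) (intv R p2) x <-> seg a b x).
  by move=> h; apply: ab_ne => x; split => /h.
have [_ basis] := reg _ _ _ _ u q1 edge12 edge_ab (seg_first _ _) p1_ab ab_ne'
  u_seg q1_ab u_prim q1_prim.
split.
- rewrite (content_cross_orth ln'_u basis ln_prim (face_dot_sub_eq0 q1_n p1_n)).
  by rewrite ger0_norm // (face_dot_ge0 p1_n' q1_n.1).
- exact: (dvdz_dot_orth ln'_u basis (face_dot_sub_eq0 q2_n p2_n)).
Qed.
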